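(* Let $N\ge 1$. The set of all positive integers $n$ whose Chung–Graham decomposition has coefficient $c_N=0$ (i.e. contains neither $F_{2N}$ nor $2F_{2N}$) is $$B_{2N}=\{1,2,\dots,F_{2N}-1\}\cup\bigcup_{k=N+1}^{\infty}\left\{\,j+F_{2k},\ \ j+(n+2)F_{2k}+\left\lfloor\frac{n+1}{\phi}\right\rfloor F_{2k-1}\ :\ 0\le j\le F_{2N}-1,\ n\ge 0\right\},$$ where $\phi=(1+\sqrt5)/2$.
   Context: Fibonacci numbers: $F_1=F_2=1$, $F_{n+1}=F_n+F_{n-1}$ for $n\ge2$. Chung–Graham decomposition: every positive integer $n$ has a unique representation $n=\sum_{i\ge1}c_iF_{2i}$ with $c_i\in\{0,1,2\}$, only finitely many nonzero, such that whenever $c_i=c_j=2$ with $i<j$ there is $k$ with $i<k<j$ and $c_k=0$ (call this the Chung–Graham condition). $\lfloor\cdot\rfloor$ is the floor function. *)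

From Stdlib Require Import Reals Arith List ZArith.
Import ListNotations.

Fixpoint fib (n : nat) : nat :=
  match n with
  | 0 => 0
  | S m => match m with
           | 0 => 1
           | S k => fib m + fib k
           end
  end.

(* A finitely supported coefficient sequence (c_1, c_2, ..., c_L) is stored
   as a list c; coef c i = c_i for i >= 1 (and 0 beyond the list). *)
Definition coef (c : list nat) (i : nat) : nat := nth (i - 1) c 0.

Fixpoint cg_val_from (start : nat) (c : list nat) : nat :=
  match c with
  | [] => 0
  | x :: r => x * fib (2 * start) + cg_val_from (S start) r
  end.

Definition cg_val (c : list nat) : nat := cg_val_from 1 c.

Definition is_CG_rep (c : list nat) (n : nat) : Prop :=
  (forall i, 1 <= i -> coef c i <= 2) /\
  (forall i j, 1 <= i -> i < j -> coef c i = 2 -> coef c j = 2 ->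
     exists k, i < k /\ k < j /\ coef c k = 0) /\
  cg_val c = n.

Definition phi : R := ((1 + sqrt 5) / 2)%R.

Definition floor_succ_div_phi (m : nat) : nat :=
  Z.to_nat (Int_part (INR (m + 1) / phi)).

Definition in_B (N n : nat) : Prop :=
  (1 <= n /\ n <= fib (2 * N) - 1) \/
  (exists k j, N + 1 <= k /\ j <= fib (2 * N) - 1 /\
     (n = j + fib (2 * k) \/
      exists m, n = j + (m + 2) * fib (2 * k)
                  + floor_succ_div_phi m * fib (2 * k - 1))).

(* Attach to a digit string c the pair B = sum c_i F_{2i} and W = sum c_i F_{2i+1}.
   Since F_{2i+1} - phi F_{2i} = (1 - phi)^{2i}, the defect W - phi B is
   sum c_i (2 - phi)^i, and the Chung-Graham condition confines it to [0, 1), and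
   below phi - 1 when every 2 is preceded by a 0. So W = ceil (phi B) is determined
   by B, which yields uniqueness of the decomposition and, choosing the leading
   digit, its existence. If c_N = 0, the decomposition splits into a part below
   F_{2N} and a part starting at some index k > N with leading digit d and tail v,
   worth (d + W v) F_{2k} + (B v) F_{2k-1}; the defect bounds on the tail say exactly
   that B v = floor ((m + 1) / phi) with m = d + W v - 2. Conversely every such
   value is realised, and uniqueness transfers c_N = 0 to all representations. *)

From Stdlib Require Import Reals Arith List ZArith Lia Lra Psatz.
Import ListNotations.

Lemma fib_SS n : fib (S (S n)) = fib (S n) + fib n.
Proof. reflexivity. Qed.

Lemma fib_le_S n : fib n <= fib (S n).
Proof. destruct n as [|n]; [simpl; lia | rewrite fib_SS; lia]. Qed.

Lemma fib_mono n m : n <= m -> fib n <= fib m.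
Proof. induction 1; [lia | pose proof (fib_le_S m); lia]. Qed.

Lemma fib_pos n : 1 <= n -> 1 <= fib n.
Proof. intros H. pose proof (fib_mono 1 n H). simpl in *; lia. Qed.

Fixpoint cg_odd_from (start : nat) (c : list nat) : nat :=
  match c with
  | [] => 0
  | x :: r => x * fib (2 * start + 1) + cg_odd_from (S start) r
  end.

Definition cg_odd (c : list nat) : nat := cg_odd_from 1 c.

Lemma cg_val_from_S s l : cg_val_from (S s) l = cg_odd_from s l + cg_val_from s l.
Proof.
  revert s; induction l as [|x r IH]; intros s; cbn [cg_val_from cg_odd_from]; [lia|].
  rewrite IH. replace (2 * S s) with (S (S (2 * s))) by lia.
  replace (2 * s + 1) with (S (2 * s)) by lia. rewrite fib_SS. lia.
Qed.

Lemma cg_odd_from_S s l : cg_odd_from (S s) l = cg_val_from (S s) l + cg_odd_from s l.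
Proof.
  revert s; induction l as [|x r IH]; intros s; cbn [cg_val_from cg_odd_from]; [lia|].
  rewrite IH. replace (2 * S s + 1) with (S (S (2 * s + 1))) by lia.
  replace (2 * S s) with (S (2 * s + 1)) by lia. rewrite fib_SS. lia.
Qed.

Lemma cg_val_cons d r : cg_val (d :: r) = d + cg_odd r + cg_val r.
Proof. unfold cg_val, cg_odd; cbn [cg_val_from]. rewrite cg_val_from_S. simpl; lia. Qed.

Lemma cg_odd_cons d r : cg_odd (d :: r) = 2 * d + 2 * cg_odd r + cg_val r.
Proof.
  unfold cg_val, cg_odd; cbn [cg_odd_from]. rewrite cg_odd_from_S, cg_val_from_S. simpl; lia.
Qed.

Lemma cg_val_from_shift k l :
  cg_val_from (S (S k)) l = fib (2 * k + 2) * cg_odd l + fib (2 * k + 1) * cg_val l.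
Proof.
  enough (cg_val_from (S (S k)) l = fib (2 * k + 2) * cg_odd l + fib (2 * k + 1) * cg_val l /\
          cg_odd_from (S (S k)) l = fib (2 * k + 3) * cg_odd l + fib (2 * k + 2) * cg_val l)
    by tauto.
  unfold cg_val, cg_odd. induction k as [|k [IHv IHo]].
  - rewrite (cg_odd_from_S 1 l), (cg_val_from_S 1 l). simpl; lia.
  - rewrite (cg_odd_from_S (S (S k)) l), (cg_val_from_S (S (S k)) l), IHv, IHo.
    replace (2 * S k + 2) with (S (S (2 * k + 2))) by lia.
    replace (2 * S k + 3) with (S (S (2 * k + 3))) by lia.
    replace (2 * S k + 1) with (S (S (2 * k + 1))) by lia.
    replace (2 * k + 3) with (S (2 * k + 2)) by lia.
    replace (2 * k + 2) with (S (2 * k + 1)) by lia.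
    rewrite !fib_SS. lia.
Qed.

Fixpoint zero_before_two (l : list nat) : bool :=
  match l with
  | [] => true
  | 0 :: _ => true
  | 2 :: _ => false
  | _ :: r => zero_before_two r
  end.

Fixpoint cg_digits (l : list nat) : Prop :=
  match l with
  | [] => True
  | d :: r => d <= 2 /\ cg_digits r /\ (d = 2 -> zero_before_two r = true)
  end.

Lemma zero_before_two_spec l : zero_before_two l = true <->
  (forall j, nth j l 0 = 2 -> exists k, k < j /\ nth k l 0 = 0).
Proof.
  induction l as [|x l IH]; split.
  - intros _ [|j] Hj; discriminate.
  - reflexivity.
  - intros H [|j] Hj; simpl in Hj.
    + subst x. discriminate.
    + destruct x as [|x]; [exists 0; split; [lia | reflexivity]|].
      assert (Hl : zero_before_two l = true) by (destruct x as [|[|x]]; auto; discriminate).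
      destruct (proj1 IH Hl j Hj) as [k [Hk Hk0]]. exists (S k). split; [lia | exact Hk0].
  - intros H. destruct x as [|x]; [reflexivity|].
    assert (Hl : zero_before_two l = true).
    { apply IH. intros j Hj. destruct (H (S j) Hj) as [[|k] [Hk Hk0]]; [discriminate|].
      exists k. split; [lia | exact Hk0]. }
    destruct x as [|[|x]]; simpl; auto.
    destruct (H 0 eq_refl) as [k [Hk _]]. lia.
Qed.

Lemma cg_digits_spec l : cg_digits l <->
  (forall i, nth i l 0 <= 2) /\
  (forall i j, i < j -> nth i l 0 = 2 -> nth j l 0 = 2 ->
     exists k, i < k /\ k < j /\ nth k l 0 = 0).
Proof.
  induction l as [|x l IH]; split.
  - intros _. split; intros [|i]; simpl; lia.
  - intros _. exact I.
  - intros [Hx [Hl H2]]. destruct (proj1 IH Hl) as [Hle Hgap]. split.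
    + intros [|i]; simpl; auto.
    + intros [|i] [|j] Hij Hi Hj; simpl in Hi, Hj; try lia.
      * destruct (proj1 (zero_before_two_spec l) (H2 Hi) j Hj) as [k [Hk Hk0]].
        exists (S k). repeat split; [lia | lia | exact Hk0].
      * destruct (Hgap i j ltac:(lia) Hi Hj) as [k [Hk1 [Hk2 Hk0]]].
        exists (S k). repeat split; [lia | lia | exact Hk0].
  - intros [Hle Hgap]. split; [exact (Hle 0)|]. split.
    + apply IH. split; [intros i; exact (Hle (S i))|].
      intros i j Hij Hi Hj.
      destruct (Hgap (S i) (S j) ltac:(lia) Hi Hj) as [[|k] [Hk1 [Hk2 Hk0]]]; [lia|].
      exists k. repeat split; [lia | lia | exact Hk0].
    + intros Hx. apply zero_before_two_spec. intros j Hj.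
      destruct (Hgap 0 (S j) ltac:(lia) Hx Hj) as [[|k] [Hk1 [Hk2 Hk0]]]; [lia|].
      exists k. split; [lia | exact Hk0].
Qed.

Lemma coefS c i : coef c (S i) = nth i c 0.
Proof. unfold coef. f_equal. lia. Qed.

Lemma is_CG_rep_spec c n : is_CG_rep c n <-> cg_digits c /\ cg_val c = n.
Proof.
  rewrite cg_digits_spec. unfold is_CG_rep. split.
  - intros [Hle [Hgap Hv]]. split; [split|exact Hv].
    + intros i. rewrite <- coefS. apply Hle. lia.
    + intros i j Hij Hi Hj. rewrite <- coefS in Hi, Hj.
      destruct (Hgap (S i) (S j) ltac:(lia) ltac:(lia) Hi Hj) as [[|k] [Hk1 [Hk2 Hk0]]]; [lia|].
      rewrite coefS in Hk0. exists k. repeat split; [lia | lia | exact Hk0].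
  - intros [[Hle Hgap] Hv]. repeat split; [| |exact Hv].
    + intros [|i] Hi; [lia|]. rewrite coefS. apply Hle.
    + intros [|i] [|j] Hi Hij Ci Cj; try lia. rewrite coefS in Ci, Cj.
      destruct (Hgap i j ltac:(lia) Ci Cj) as [k [Hk1 [Hk2 Hk0]]].
      exists (S k). rewrite coefS. repeat split; [lia | lia | exact Hk0].
Qed.

Lemma sqrt5_bounds : (11 / 5 < sqrt 5 < 7 / 3)%R.
Proof.
  assert (H : (sqrt 5 * sqrt 5 = 5)%R) by (apply sqrt_sqrt; lra).
  pose proof (sqrt_pos 5). split; nra.
Qed.

Lemma phi_sq : (phi * phi = phi + 1)%R.
Proof.
  assert (H : (sqrt 5 * sqrt 5 = 5)%R) by (apply sqrt_sqrt; lra).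
  unfold phi. nra.
Qed.

Lemma phi_bounds : (3 / 2 < phi < 5 / 3)%R.
Proof. pose proof sqrt5_bounds. unfold phi. lra. Qed.

(* Since F_{2i+1} - phi F_{2i} = (1 - phi)^{2i}, this is sum_i c_i (2 - phi)^i. *)
Definition cg_defect (l : list nat) : R := (INR (cg_odd l) - phi * INR (cg_val l))%R.

Lemma cg_defect_cons d r : cg_defect (d :: r) = ((2 - phi) * (INR d + cg_defect r))%R.
Proof.
  unfold cg_defect. rewrite cg_odd_cons, cg_val_cons, !plus_INR, !mult_INR.
  assert (E : forall a b c : R,
    ((1 + 1) * a + (1 + 1) * b + c - phi * (a + b + c) - (2 - phi) * (a + (b - phi * c))
     = (phi + 1 - phi * phi) * c)%R) by (intros; ring).
  apply Rminus_diag_uniq. simpl (INR 2). rewrite E, phi_sq. ring.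
Qed.

Lemma cg_defect_bounds l : cg_digits l ->
  (0 <= cg_defect l < 1)%R /\
  (if zero_before_two l then cg_defect l < phi - 1 else phi - 1 <= cg_defect l)%R.
Proof.
  pose proof phi_sq. pose proof phi_bounds.
  induction l as [|d r IH]; intros Hl.
  - unfold cg_defect; simpl. lra.
  - destruct Hl as [Hd [Hr H2]]. destruct (IH Hr) as [[D0 D1] Dz].
    rewrite cg_defect_cons.
    destruct d as [|[|[|d]]]; [| | |lia]; simpl zero_before_two; simpl INR.
    + split; nra.
    + destruct (zero_before_two r); split; nra.
    + rewrite (H2 eq_refl) in Dz. split; nra.
Qed.

Lemma INR_lt_succ (a b : nat) : (INR a < INR b + 1)%R -> a <= b.
Proof. intros H. rewrite <- S_INR in H. apply INR_lt in H. lia. Qed.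

(* The defect lies in [0, 1), so cg_odd l is the ceiling of phi * cg_val l. *)
Lemma cg_odd_determined u v : cg_digits u -> cg_digits v ->
  cg_val u = cg_val v -> cg_odd u = cg_odd v.
Proof.
  intros Hu Hv E.
  destruct (cg_defect_bounds u Hu) as [[U0 U1] _], (cg_defect_bounds v Hv) as [[V0 V1] _].
  unfold cg_defect in *. rewrite E in U0, U1.
  apply Nat.le_antisymm; apply INR_lt_succ; lra.
Qed.

Lemma cg_val_eq0 l : cg_val l = 0 -> forall i, nth i l 0 = 0.
Proof.
  induction l as [|d r IH]; intros H [|i]; simpl; try reflexivity;
    rewrite cg_val_cons in H; [lia | apply IH; lia].
Qed.

Lemma cg_digits_unique u v : cg_digits u -> cg_digits v ->
  cg_val u = cg_val v -> forall i, nth i u 0 = nth i v 0.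
Proof.
  revert u; induction v as [|d r IH]; intros u Hu Hv E i.
  - rewrite (cg_val_eq0 u E). destruct i; reflexivity.
  - destruct u as [|e s].
    + rewrite (cg_val_eq0 (d :: r) (eq_sym E)). destruct i; reflexivity.
    + pose proof (cg_odd_determined _ _ Hu Hv E) as Eodd.
      rewrite !cg_val_cons in E. rewrite !cg_odd_cons in Eodd.
      destruct Hu as [_ [Hs _]], Hv as [_ [Hr _]].
      assert (Es : cg_val s = cg_val r) by lia.
      pose proof (cg_odd_determined _ _ Hs Hr Es).
      destruct i as [|i]; simpl; [lia | apply IH; auto].
Qed.

Lemma nat_ceil (y : R) : (0 <= y)%R -> exists w : nat, (y <= INR w < y + 1)%R.
Proof.
  intros Hy. destruct (archimed y) as [H1 H2].
  assert (Hz : (0 < up y)%Z) by (apply lt_IZR; simpl; lra).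
  destruct (Req_dec (IZR (up y) - y) 1) as [Eq|Ne].
  - exists (Z.to_nat (up y - 1)). rewrite INR_IZR_INZ, Z2Nat.id by lia.
    rewrite minus_IZR. simpl. lra.
  - exists (Z.to_nat (up y)). rewrite INR_IZR_INZ, Z2Nat.id by lia. lra.
Qed.

(* With W the ceiling of phi * n, the tail must represent 2n - W and the leading
   digit is W - n - cg_odd tail; the defect bounds of the tail keep it in {0,1,2}. *)
Lemma cg_digits_exist n : exists l, cg_digits l /\ cg_val l = n.
Proof.
  induction n as [n IH] using lt_wf_ind.
  destruct n as [|n'].
  { exists []. split; [exact I | reflexivity]. }
  set (n := S n') in *.
  pose proof phi_sq. pose proof phi_bounds.
  assert (Hn : (1 <= INR n)%R) by (unfold n; rewrite S_INR; pose proof (pos_INR n'); lra).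
  destruct (nat_ceil (INR n * phi)) as [W [HW1 HW2]]; [nra|].
  assert (HWn : n < W) by (apply INR_lt; nra).
  assert (HW2n : W <= 2 * n)
    by (apply INR_lt_succ; rewrite mult_INR; simpl (INR 2); nra).
  destruct (IH (2 * n - W)) as [r [Hr Vr]]; [lia|].
  destruct (cg_defect_bounds r Hr) as [[D0 D1] Dz].
  unfold cg_defect in D0, D1, Dz. rewrite Vr, minus_INR, mult_INR in D0, D1, Dz by lia.
  simpl (INR 2) in D0, D1, Dz.
  assert (Hlow : n + cg_odd r <= W) by (apply INR_lt_succ; rewrite plus_INR; nra).
  assert (Hhigh : W - n - cg_odd r <= 2).
  { apply INR_lt_succ. rewrite !minus_INR by lia. simpl (INR 2). nra. }
  exists ((W - n - cg_odd r) :: r). split.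
  - split; [exact Hhigh|]. split; [exact Hr|]. intros E2.
    destruct (zero_before_two r); [reflexivity | exfalso].
    assert (EW : INR W = (INR n + INR (cg_odd r) + 2)%R).
    { replace W with (n + cg_odd r + 2) by lia. rewrite !plus_INR. reflexivity. }
    nra.
  - rewrite cg_val_cons. lia.
Qed.

Lemma cg_val_from_app a b s :
  cg_val_from s (a ++ b) = cg_val_from s a + cg_val_from (s + length a) b.
Proof.
  revert s; induction a as [|x a IH]; intros s; simpl.
  - rewrite Nat.add_0_r. reflexivity.
  - rewrite IH. replace (S s + length a) with (s + S (length a)) by lia. lia.
Qed.

Lemma cg_val_from_zeros l s : (forall i, nth i l 0 = 0) -> cg_val_from s l = 0.
Proof.
  revert s; induction l as [|x l IH]; intros s H; simpl; [reflexivity|].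
  pose proof (H 0) as H0; simpl in H0; subst x.
  rewrite IH; [reflexivity|]. intros i; exact (H (S i)).
Qed.

Lemma cg_val_from_repeat0_app t l s :
  cg_val_from s (repeat 0 t ++ l) = cg_val_from (s + t) l.
Proof.
  rewrite cg_val_from_app, cg_val_from_zeros, repeat_length; [reflexivity|].
  intros i. apply nth_repeat.
Qed.

Lemma cg_val_from_ge_digit l s i : 1 <= nth i l 0 -> fib (2 * (s + i)) <= cg_val_from s l.
Proof.
  revert s i; induction l as [|x l IH]; intros s [|i] H; cbn [nth cg_val_from] in H |- *; try lia.
  - rewrite Nat.add_0_r. nia.
  - specialize (IH (S s) i H). replace (S s + i) with (s + S i) in IH by lia. lia.
Qed.

Lemma cg_val_from_pos l s : 0 < cg_val_from s l -> exists i, 1 <= nth i l 0.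
Proof.
  revert s; induction l as [|[|x] l IH]; intros s H; simpl in H.
  - lia.
  - destruct (IH (S s) H) as [i Hi]. exists (S i). exact Hi.
  - exists 0. simpl. lia.
Qed.

Lemma zero_before_two_app a b : zero_before_two (a ++ b) = true -> zero_before_two a = true.
Proof. induction a as [|[|[|[|x]]] a IH]; simpl; auto. Qed.

Lemma zero_before_two_app0 a b : zero_before_two a = true -> zero_before_two (a ++ 0 :: b) = true.
Proof. induction a as [|[|[|[|x]]] a IH]; simpl; auto. Qed.

Lemma cg_digits_app_inv a b : cg_digits (a ++ b) -> cg_digits a /\ cg_digits b.
Proof.
  induction a as [|x a IH]; simpl; intros H; [split; [exact I | exact H]|].
  destruct H as [Hx [Hab H2]]. destruct (IH Hab) as [Ha Hb].
  repeat split; auto. intros E. apply (zero_before_two_app a b). auto.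
Qed.

Lemma cg_digits_app0 a b : cg_digits a -> cg_digits b -> cg_digits (a ++ 0 :: b).
Proof.
  induction a as [|x a IH]; simpl; intros Ha Hb.
  - repeat split; auto; lia.
  - destruct Ha as [Hx [Ha H2]]. repeat split; auto.
    intros E. apply zero_before_two_app0. auto.
Qed.

Lemma cg_digits_repeat0_app t l : cg_digits (repeat 0 t ++ l) <-> cg_digits l.
Proof.
  induction t as [|t IH]; simpl; [tauto|].
  split; [intros [_ [H _]]; apply IH, H | intros H; repeat split; [lia | apply IH, H | lia]].
Qed.

Lemma leading_zeros l : (forall i, nth i l 0 = 0) \/
  exists t d v, d <> 0 /\ l = repeat 0 t ++ d :: v.
Proof.
  induction l as [|[|x] l IH].
  - left; intros [|i]; reflexivity.
  - destruct IH as [H | [t [d [v [Hd E]]]]].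
    + left; intros [|i]; simpl; auto.
    + right. exists (S t), d, v. split; [exact Hd | rewrite E; reflexivity].
  - right. exists 0, (S x), l. split; [lia | reflexivity].
Qed.

Lemma cg_val_from_bound l s : cg_digits l ->
  cg_val_from (S s) l + fib (if zero_before_two l then 2 * s + 2 else 2 * s + 1)
  <= fib (2 * s + 2 + 2 * length l).
Proof.
  revert s; induction l as [|x l IH]; intros s Hl; simpl length.
  - cbn [cg_val_from zero_before_two].
    replace (2 * s + 2 + 2 * 0) with (2 * s + 2) by lia. lia.
  - destruct Hl as [Hx [Hl H2]]. specialize (IH (S s) Hl).
    cbn [cg_val_from]. replace (2 * S s) with (2 * s + 2) by lia.
    replace (2 * S s + 2 + 2 * length l) with (2 * s + 2 + 2 * S (length l)) in IH by lia.
    assert (F3 : fib (2 * S s + 1) = fib (2 * s + 2) + fib (2 * s + 1))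
      by (replace (2 * S s + 1) with (S (S (2 * s + 1))) by lia; rewrite fib_SS; f_equal; f_equal; lia).
    assert (F4 : fib (2 * S s + 2) = fib (2 * S s + 1) + fib (2 * s + 2))
      by (replace (2 * S s + 2) with (S (S (2 * s + 2))) by lia; rewrite fib_SS; f_equal; f_equal; lia).
    destruct x as [|[|[|x]]]; [| | |lia]; simpl zero_before_two.
    + destruct (zero_before_two l); lia.
    + destruct (zero_before_two l); lia.
    + rewrite (H2 eq_refl) in IH. lia.
Qed.

Lemma cg_val_lt_fib l : cg_digits l -> cg_val l < fib (2 * S (length l)).
Proof.
  intros Hl. pose proof (cg_val_from_bound l 0 Hl) as H.
  replace (2 * 0 + 2 + 2 * length l) with (2 * S (length l)) in H by lia.
  assert (1 <= fib (if zero_before_two l then 2 * 0 + 2 else 2 * 0 + 1))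
    by (destruct (zero_before_two l); apply fib_pos; lia).
  unfold cg_val. lia.
Qed.
Lemma floor_succ_div_phi_spec m :
  (INR (floor_succ_div_phi m) * phi <= INR (m + 1) < (INR (floor_succ_div_phi m) + 1) * phi)%R.
Proof.
  pose proof phi_bounds. unfold floor_succ_div_phi.
  set (y := (INR (m + 1) / phi)%R).
  assert (Hy0 : (0 <= y)%R)
    by (unfold y; apply Rmult_le_pos; [apply pos_INR | apply Rlt_le, Rinv_0_lt_compat; lra]).
  assert (Hy : (y * phi = INR (m + 1))%R) by (unfold y; field; lra).
  destruct (base_Int_part y) as [H1 H2].
  assert (HI : (0 <= Int_part y)%Z).
  { assert (Hgt : (-1 < IZR (Int_part y))%R) by lra. apply lt_IZR in Hgt. lia. }
  rewrite INR_IZR_INZ, Z2Nat.id by exact HI. split; nra.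
Qed.

Lemma floor_succ_div_phi_unique m b :
  (INR b * phi <= INR (m + 1) < (INR b + 1) * phi)%R -> floor_succ_div_phi m = b.
Proof.
  intros [H1 H2]. pose proof (floor_succ_div_phi_spec m) as [G1 G2]. pose proof phi_bounds.
  apply Nat.le_antisymm; apply INR_lt_succ; nra.
Qed.

Definition upper_value (k x : nat) : Prop :=
  x = fib (2 * k) \/
  exists m, x = (m + 2) * fib (2 * k) + floor_succ_div_phi m * fib (2 * k - 1).

Lemma cg_val_from_cons_shift k0 d v : cg_val_from (S (S k0)) (d :: v) =
  (d + cg_odd v) * fib (2 * S (S k0)) + cg_val v * fib (2 * S (S k0) - 1).
Proof.
  cbn [cg_val_from]. rewrite cg_val_from_shift.
  replace (2 * S k0 + 2) with (2 * S (S k0)) by lia.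
  replace (2 * S k0 + 1) with (2 * S (S k0) - 1) by lia. lia.
Qed.

(* By cg_val_from_cons_shift, m = d + cg_odd v - 2; the defect bounds on the tail v
   say exactly that cg_val v is the floor of (m + 1) / phi. *)
Lemma upper_value_of_digits k0 d v : cg_digits (d :: v) -> d <> 0 ->
  upper_value (S (S k0)) (cg_val_from (S (S k0)) (d :: v)).
Proof.
  intros [Hd [Hv H2]] Hd0. rewrite cg_val_from_cons_shift. pose proof phi_bounds.
  destruct (cg_defect_bounds v Hv) as [[D0 D1] Dz]. unfold cg_defect in D0, D1, Dz.
  destruct (Nat.eq_dec (d + cg_odd v) 1) as [E1|E1].
  - left. rewrite E1.
    assert (Hodd : cg_odd v = 0) by lia. rewrite Hodd in D0. simpl in D0.
    assert (Hval : cg_val v = 0).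
    { destruct (cg_val v) as [|b]; [reflexivity|].
      rewrite S_INR in D0. pose proof (pos_INR b). nra. }
    rewrite Hval. lia.
  - right. exists (d + cg_odd v - 2).
    rewrite (floor_succ_div_phi_unique _ (cg_val v)); [f_equal; f_equal; lia|].
    replace (d + cg_odd v - 2 + 1) with ((d - 1) + cg_odd v) by lia.
    rewrite plus_INR. destruct d as [|[|[|d]]]; try lia; simpl INR.
    + nra.
    + rewrite (H2 eq_refl) in Dz. nra.
Qed.

Lemma digits_of_upper_value k0 x : upper_value (S (S k0)) x ->
  exists d v, cg_digits (d :: v) /\ d <> 0 /\ cg_val_from (S (S k0)) (d :: v) = x.
Proof.
  intros [Hx | [m Hx]].
  { exists 1, []. repeat split; try lia. cbn [cg_val_from]. lia. }
  destruct (cg_digits_exist (floor_succ_div_phi m)) as [v [Hv Vv]].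
  pose proof (floor_succ_div_phi_spec m) as [G1 G2]. rewrite <- Vv in G1, G2.
  pose proof phi_bounds.
  destruct (cg_defect_bounds v Hv) as [[D0 D1] Dz]. unfold cg_defect in D0, D1, Dz.
  rewrite plus_INR in G1, G2. simpl (INR 1) in G1, G2.
  assert (Hodd : cg_odd v <= m + 1) by (apply INR_lt_succ; rewrite plus_INR; simpl (INR 1); nra).
  assert (Hd : m + 2 - cg_odd v <= 2).
  { apply INR_lt_succ. rewrite minus_INR, plus_INR by lia. simpl (INR 2). nra. }
  exists (m + 2 - cg_odd v), v. repeat split; [exact Hd | exact Hv | | lia |].
  - intros E2. destruct (zero_before_two v); [reflexivity | exfalso].
    assert (cg_odd v = m) by lia. subst m. nra.
  - rewrite cg_val_from_cons_shift, Vv, Hx. f_equal. f_equal. lia.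
Qed.

Definition splits_at (N1 n : nat) : Prop :=
  n < fib (2 * S N1) \/
  exists k j d v, S N1 < k /\ j < fib (2 * S N1) /\ cg_digits (d :: v) /\ d <> 0 /\
    n = j + cg_val_from k (d :: v).

Lemma splits_at_of_digit_zero N1 c : cg_digits c -> nth N1 c 0 = 0 -> splits_at N1 (cg_val c).
Proof.
  intros Hc Hz.
  destruct (le_lt_dec (length c) N1) as [Hlen | Hlen].
  { left. pose proof (cg_val_lt_fib c Hc). pose proof (fib_mono (2 * S (length c)) (2 * S N1)). lia. }
  destruct (nth_split c 0 Hlen) as [l1 [l2 [Ec L1]]]. rewrite Hz in Ec. subst c.
  destruct (cg_digits_app_inv _ _ Hc) as [H1 [_ [H2 _]]].
  pose proof (cg_val_lt_fib l1 H1) as B1. rewrite L1 in B1.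
  unfold cg_val. rewrite cg_val_from_app, L1. cbn [cg_val_from].
  destruct (leading_zeros l2) as [Z | [t [d [v [Hd E2]]]]].
  - left. rewrite (cg_val_from_zeros l2) by exact Z. unfold cg_val in B1. lia.
  - right. subst l2. apply cg_digits_repeat0_app in H2.
    exists (S (1 + N1) + t), (cg_val l1), d, v.
    rewrite cg_val_from_repeat0_app. unfold cg_val.
    split; [lia | split; [exact B1 | split; [exact H2 | split; [exact Hd | lia]]]].
Qed.

Lemma cg_digits_short_of_lt N1 j : j < fib (2 * S N1) ->
  exists l, cg_digits l /\ length l <= N1 /\ cg_val l = j.
Proof.
  intros Hj. destruct (cg_digits_exist j) as [l [Hl Vl]].
  destruct (le_lt_dec (length l) N1) as [Hle | Hlt]; [exists l; auto|].
  exists (firstn N1 l).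
  pose proof (firstn_skipn N1 l) as E.
  assert (L : length (firstn N1 l) = N1) by (rewrite length_firstn; lia).
  rewrite <- E in Hl. destruct (cg_digits_app_inv _ _ Hl) as [H1 _].
  split; [exact H1 | split; [lia|]].
  assert (Vsplit : j = cg_val (firstn N1 l) + cg_val_from (1 + N1) (skipn N1 l))
    by (rewrite <- Vl, <- E at 1; unfold cg_val; rewrite cg_val_from_app, L; reflexivity).
  destruct (Nat.eq_dec (cg_val_from (1 + N1) (skipn N1 l)) 0) as [Z | Z]; [lia | exfalso].
  destruct (cg_val_from_pos (skipn N1 l) (1 + N1) ltac:(lia)) as [i Hi].
  pose proof (cg_val_from_ge_digit (skipn N1 l) (1 + N1) i Hi).
  pose proof (fib_mono (2 * S N1) (2 * (1 + N1 + i)) ltac:(lia)). lia.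
Qed.

Lemma cg_digits_glue N1 l k0 d v : cg_digits l -> length l <= N1 -> N1 <= k0 ->
  cg_digits (d :: v) ->
  exists c, cg_digits c /\ cg_val c = cg_val l + cg_val_from (S (S k0)) (d :: v) /\
            nth N1 c 0 = 0.
Proof.
  intros Hl L Hk Hdv.
  exists (l ++ repeat 0 (S (k0 - length l)) ++ d :: v). repeat split.
  - apply cg_digits_app0; [exact Hl | apply cg_digits_repeat0_app, Hdv].
  - unfold cg_val. rewrite cg_val_from_app, cg_val_from_repeat0_app.
    replace (1 + length l + S (k0 - length l)) with (S (S k0)) by lia. reflexivity.
  - rewrite app_nth2, app_nth1 by (rewrite ?repeat_length; lia). apply nth_repeat.
Qed.

Lemma digit_zero_of_splits_at N1 c : cg_digits c -> splits_at N1 (cg_val c) -> nth N1 c 0 = 0.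
Proof.
  intros Hc [Hlt | [k [j [d [v [Hk [Hj [Hdv [_ Ev]]]]]]]]].
  - destruct (Nat.eq_dec (nth N1 c 0) 0) as [Z | Z]; [exact Z | exfalso].
    pose proof (cg_val_from_ge_digit c 1 N1 ltac:(lia)).
    replace (2 * (1 + N1)) with (2 * S N1) in H by lia. unfold cg_val in Hlt. lia.
  - destruct (cg_digits_short_of_lt N1 j Hj) as [l [Hl [L Vl]]].
    destruct k as [|[|k0]]; [lia | lia|].
    destruct (cg_digits_glue N1 l k0 d v Hl L ltac:(lia) Hdv) as [c0 [Hc0 [V0 Z0]]].
    rewrite <- Z0 at 2. apply cg_digits_unique; [exact Hc | exact Hc0 | lia].
Qed.

Lemma in_B_iff_splits_at N1 n : 1 <= n -> in_B (S N1) n <-> splits_at N1 n.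
Proof.
  intros Hn. pose proof (fib_pos (2 * S N1) ltac:(lia)). split.
  - intros [[_ Hlt] | [k [j [Hk [Hj Hform]]]]]; [left; lia | right].
    destruct k as [|[|k0]]; [lia | lia |].
    destruct (digits_of_upper_value k0 (n - j)) as [d [v [Hdv [Hd0 Ev]]]].
    { destruct Hform as [E | [m E]]; [left | right; exists m]; lia. }
    assert (j <= n) by (destruct Hform as [E | [m E]]; lia).
    exists (S (S k0)), j, d, v.
    split; [lia | split; [lia | split; [exact Hdv | split; [exact Hd0 | lia]]]].
  - intros [Hlt | [k [j [d [v [Hk [Hj [Hdv [Hd0 Ev]]]]]]]]]; [left; lia | right].
    destruct k as [|[|k0]]; [lia | lia |].
    exists (S (S k0)), j. repeat split; [lia | lia |].
    destruct (upper_value_of_digits k0 d v Hdv Hd0) as [E | [m E]];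
      [left | right; exists m]; lia.
Qed.

Theorem theorem1p3 (N : nat) (HN : 1 <= N) (n : nat) (Hn : 1 <= n) :
  (forall c : list nat, is_CG_rep c n -> coef c N = 0) <-> in_B N n.
Proof.
  destruct N as [|N1]; [lia|].
  rewrite (in_B_iff_splits_at N1 n Hn). split.
  - intros H. destruct (cg_digits_exist n) as [c [Hc Vc]].
    rewrite <- Vc. apply splits_at_of_digit_zero; [exact Hc|].
    rewrite <- coefS. apply H, is_CG_rep_spec. auto.
  - intros Hs c Hc. apply is_CG_rep_spec in Hc as [Hc Vc]. subst n.
    rewrite coefS. apply digit_zero_of_splits_at; assumption.
Qed.
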